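(* Let $n\ge 20$ be an integer. For all integers $p\ge 1$ and $q\ge 3$ with $p+q=n-2$, $$\lambda_{\min}\big(\mathcal U(p,q)^c\big)\ \ge\ \lambda_{\min}\Big(\mathcal U\big(\lceil (n-2)/2\rceil,\lfloor (n-2)/2\rfloor\big)^c\Big),$$ with equality if and only if $p=\lceil (n-2)/2\rceil$ and $q=\lfloor (n-2)/2\rfloor$.
   Context: All graphs are simple and finite. For a graph $G$, $\lambda_{\min}(G)$ denotes the least eigenvalue of the adjacency matrix $A(G)$, and $G^c$ denotes the complement of $G$. $K_{1,m}$ is the star with $m$ edges; its vertex of degree $m$ is the center and the others are pendant vertices. $S_m^3$ denotes the graph of order $m$ obtained from $K_{1,m-1}$ by adding one edge between two of its pendant vertices. For integers $p\ge 1$, $q\ge 3$, $\mathcal U(p,q)$ is the graph of order $p+q+2$ obtained from disjoint copies of $K_{1,p}$ and $S_{q+1}^3$ by adding one edge joining a pendant vertex of $K_{1,p}$ to a pendant (degree-one) vertex of $S_{q+1}^3$. *)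

From HB Require Import structures.
From mathcomp Require Import all_boot all_order all_algebra.
Set Implicit Arguments. Unset Strict Implicit. Unset Printing Implicit Defensive.
Import Order.TTheory GRing.Theory Num.Theory.
Local Open Scope ring_scope.

(* A simple graph on 'I_n is given by a symmetric irreflexive relation. *)
Definition adjmx (R : nzRingType) (n : nat) (e : rel 'I_n) : 'M[R]_n :=
  \matrix_(i, j) (e i j)%:R.

Definition compl_rel (n : nat) (e : rel 'I_n) : rel 'I_n :=
  fun i j => (i != j) && ~~ e i j.

(* U(p,q) on vertices 0 .. p+q+1:
   K_{1,p}: center 0, pendants 1..p;
   S^3_{q+1}: center p+1, pendants p+2..p+q+1, extra edge {p+2,p+3};
   joining edge {1, p+q+1} (vertex p+q+1 has degree one in S^3_{q+1} as q >= 3). *)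
Definition U_edge (p q : nat) (i j : nat) : bool :=
  [|| (i == 0%N) && (1 <= j <= p)%N,
      (i == p.+1) && (p.+2 <= j <= p + q + 1)%N,
      (i == p.+2) && (j == p.+3) |
      (i == 1%N) && (j == p + q + 1)%N].

Definition U_rel (p q : nat) : rel 'I_(p + q + 2) :=
  fun i j => U_edge p q i j || U_edge p q j i.

Definition Ucompl_mx (R : nzRingType) (p q : nat) : 'M[R]_(p + q + 2) :=
  adjmx R (compl_rel (@U_rel p q)).

Definition is_lambda_min (R : realFieldType) (n : nat) (A : 'M[R]_n) (l : R) : Prop :=
  eigenvalue A l /\ (forall m : R, eigenvalue A m -> l <= m).

From HB Require Import structures.
From mathcomp Require Import all_boot all_order all_algebra.
From mathcomp Require Import zify ring lra.
Import Order.TTheory GRing.Theory Num.Theory.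
Local Open Scope ring_scope.

(* Let A be the adjacency matrix of U(p,q)^c and t = e + 1 for an eigenvalue e.
   Since A = J - I - A(U(p,q)), an eigenvector w satisfies
       t * w_j = S - (sum of w over the U(p,q)-neighbours of j),   S = sum of w.
   For t < -3 these equations force w to be constant on the vertex classes of
   U(p,q) (the centre of K_{1,p}, its leaf joined to S^3_{q+1}, its other leaves;
   the centre of S^3_{q+1}, its two triangle vertices, its other leaves, its leaf
   joined to K_{1,p}), and the resulting quotient system has a non-zero solution
   iff t is a root of an explicit polynomial charU p q.  Hence, for t < -3,
   t - 1 is an eigenvalue of A iff charU p q t = 0 (eigenvalue_root and
   root_eigenvalue).

   Against this, charU p0 q0 < charU p q on (-oo, -3) for the balanced split
   (p0, q0) with p0 + q0 = p + q, while charU p0 q0 is negative at -3 and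
   positive at -n.  As every eigenvalue of A is at least -n, the intermediate
   value theorem gives an eigenvalue of the balanced graph strictly below any
   eigenvalue of an unbalanced one (balanced_smaller_eigenvalue), from which
   the theorem follows at once. *)

(* charU P Q t: with P = p and Q = q, its roots t < -3 are exactly the values
   e + 1 for the eigenvalues e < -4 of U(p,q)^c.  It is defined over any
   commutative ring so that it can also be read as a polynomial in t. *)
Definition charU {T : comNzRingType} (P Q t : T) : T :=
  - t^+7 + t^+6 - t^+5 + 5 * t^+4 + 4 * t^+3 - 6 * t^+2 - t - 9
  + (t + 1) * ((t^+5 - t^+4 - 2 * t^+3 + 5 * t^+2 - 11 * t + 9) * P
              + (t^+5 - t^+4 - 2 * t^+3 + t^+2 - t + 3) * Q)
  + (t + 1)^+2 * (-2 * t^+2 + 5 * t - 3) * P * Q.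

Lemma rmorph_charU (T T' : comNzRingType) (f : {rmorphism T -> T'}) (P Q t : T) :
  f (charU P Q t) = charU (f P) (f Q) (f t).
Proof.
by rewrite /charU !(rmorphD, rmorphB, rmorphN, rmorphM, rmorphXn, rmorph_nat, rmorph1).
Qed.

Lemma horner_charU (T : comNzRingType) (P Q x : T) :
  (charU P%:P Q%:P 'X).[x] = charU P Q x.
Proof.
have := @rmorph_charU _ _ (horner_eval x) P%:P Q%:P 'X.
by rewrite /= !horner_evalE !hornerC hornerX.
Qed.

Section CharPolySign.
Variable R : realFieldType.

(* The difference factors as a positive constant times a product of
   two numbers of the same sign. *)
Lemma charU_balanced_lt (P Q P0 Q0 t : R) : t < -3 -> P + Q = P0 + Q0 ->
  Q0 = P0 \/ Q0 = P0 - 1 -> P0 + 1 <= P \/ P <= P0 - 1 ->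
  charU P0 Q0 t < charU P Q t.
Proof.
move=> ht hsum hbal hfar.
have hQ : Q = P0 + Q0 - P by lra.
have Kpos : 0 < (- (t + 1)) * (2 * t^+2 - 5 * t + 3) by nra.
have -> : charU P Q t = charU P0 Q0 t + (- (t + 1)) * (2 * t^+2 - 5 * t + 3) *
   ((P - P0) * ((t + 1) * (Q0 - P0 - (P - P0)) - 2)) by rewrite hQ /charU; ring.
rewrite ltrDl; apply: mulr_gt0 => //.
set d := P - P0; have ht1 : 2 < - (t + 1) by lra.
case: hbal => ->; case: hfar => hfar.
- have h : 0 <= (- (t + 1) - 2) * (d - 1) by apply: mulr_ge0; rewrite /d; lra.
  apply: mulr_gt0; rewrite /d; nra.
- have h : 0 <= (- (t + 1)) * (- d) by apply: mulr_ge0; rewrite /d; lra.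
  rewrite -mulrNN; apply: mulr_gt0; rewrite /d; nra.
- have h : 0 <= (- (t + 1) - 2) * (d - 1) by apply: mulr_ge0; rewrite /d; lra.
  apply: mulr_gt0; rewrite /d; nra.
- have h : 0 <= (- (t + 1)) * (- d - 1) by apply: mulr_ge0; rewrite /d; lra.
  rewrite -mulrNN; apply: mulr_gt0; rewrite /d; nra.
Qed.

Lemma charU_at_m3_lt0 (P Q : R) : 9 <= P -> 9 <= Q -> charU P Q (-3) < 0.
Proof.
move=> hP hQ.
have -> : charU P Q (-3) = 3396 + 366 * P + 510 * Q - 144 * (P * Q).
  by rewrite /charU; ring.
have : 0 <= (P - 9) * (Q - 9) by apply: mulr_ge0; lra.
nra.
Qed.

(* charU is positive at -s when P + Q = s - 2 >= 18: the degree-7 term in s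
   dominates the product term P * Q <= s^2. *)
Lemma charU_far_left_gt0 (P Q s : R) : 20 <= s -> 0 <= P -> 0 <= Q ->
  P + Q = s - 2 -> 0 < charU P Q (- s).
Proof.
move=> hs hP hQ hPQ.
have -> : charU P Q (- s) =
   (s^+7 + s^+6 + s^+5 + 5 * s^+4 - 4 * s^+3 - 6 * s^+2 + s - 9)
   + (s - 1) * ((s^+5 + s^+4 - 2 * s^+3 - 5 * s^+2 - 11 * s - 9) * P
               + (s^+5 + s^+4 - 2 * s^+3 - s^+2 - s - 3) * Q)
   - (s - 1)^+2 * (2 * s^+2 + 5 * s + 3) * (P * Q) by rewrite /charU; ring.
have s2 : 400 <= s^+2 by nra.
have s3 : 20 * s^+2 <= s^+3 by rewrite exprS; nra.
have s4 : 20 * s^+3 <= s^+4 by rewrite (exprS _ 3); nra.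
have s5 : 20 * s^+4 <= s^+5 by rewrite (exprS _ 4); nra.
have s6 : 20 * s^+5 <= s^+6 by rewrite (exprS _ 5); nra.
have s7 : 20 * s^+6 <= s^+7 by rewrite (exprS _ 6); nra.
have linear_part : 0 <= (s - 1) * ((s^+5 + s^+4 - 2 * s^+3 - 5 * s^+2 - 11 * s - 9) * P
                                 + (s^+5 + s^+4 - 2 * s^+3 - s^+2 - s - 3) * Q).
  by apply: mulr_ge0; [lra | apply: addr_ge0; apply: mulr_ge0 => //; nra].
have PQ_le : P * Q <= s^+2 by nra.
have coef_le : (s - 1)^+2 * (2 * s^+2 + 5 * s + 3) <= 3 * s^+4 by nra.
have quadratic_part : (s - 1)^+2 * (2 * s^+2 + 5 * s + 3) * (P * Q) <= 3 * s^+4 * s^+2.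
  by apply: ler_pM => //; [apply: mulr_ge0; nra | apply: mulr_ge0].
have : s^+4 * s^+2 = s^+6 by rewrite -exprD.
nra.
Qed.
End CharPolySign.

Section TwoByTwo.
Context {F : fieldType}.

Lemma det2_kernel {a b c d : F} : a * d - b * c = 0 ->
  exists x y : F, (x != 0 \/ y != 0) /\ a * x + b * y = 0 /\ c * x + d * y = 0.
Proof.
move=> hdet.
have [/andP [/eqP -> /eqP ->] | ab_nz] := boolP ((a == 0) && (b == 0)).
  have [/andP [/eqP -> /eqP ->] | cd_nz] := boolP ((c == 0) && (d == 0)).
    by exists 1, 0; split; [left; exact: oner_neq0 | split; ring].
  exists d, (- c); split; last by split; ring.
  by move: cd_nz; rewrite negb_and oppr_eq0 => /orP [] ?; [right | left].
exists b, (- a); split; last by split; [ring | rewrite -[RHS]oppr0 -hdet; ring].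
by move: ab_nz; rewrite negb_and oppr_eq0 => /orP [] ?; [right | left].
Qed.

Lemma det2_trivial {a b c d x y : F} : a * d - b * c != 0 ->
  a * x + b * y = 0 -> c * x + d * y = 0 -> x = 0 /\ y = 0.
Proof.
move=> hdet e1 e2.
have hx : (a * d - b * c) * x = d * (a * x + b * y) - b * (c * x + d * y) by ring.
have hy : (a * d - b * c) * y = a * (c * x + d * y) - c * (a * x + b * y) by ring.
rewrite e1 e2 !mulr0 subrr in hx hy.
by move: hx hy => /eqP; rewrite mulf_eq0 (negbTE hdet) => /eqP ->
  /eqP; rewrite mulf_eq0 (negbTE hdet) => /eqP ->.
Qed.
End TwoByTwo.

Section QuotientSystem.
Context {R : realFieldType}.
Implicit Types t P Q S a b y c d z f : R.

(* The eigen-equations of U(p,q)^c for a class-constant vector, with P = p and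
   Q = q: a, b, y are the values on the centre of K_{1,p}, its joining leaf and
   its other P - 1 leaves; c, d, z those on the centre of S^3_{q+1}, its two
   triangle vertices and its other Q - 3 leaves; f the value on its joining
   leaf; S is the total sum and t = e + 1. *)
Definition quotient_eqs t P Q S a b y c d z f : Prop :=
  [/\ S = a + b + (P - 1) * y + c + 2 * d + (Q - 3) * z + f,
      t * a = S - (b + (P - 1) * y), t * b = S - (a + f), t * y = S - a
    & [/\ t * c = S - (2 * d + (Q - 3) * z + f), t * d = S - (c + d),
          t * z = S - c & t * f = S - (c + b)]].

(* Solving successively the equations at an extra star leaf, the star centre,
   the joining star leaf and the joining leaf of S^3_{q+1} expresses a, b, f, c
   through S and y. *)
Definition hub1_val t S y : R := S - t * y.
Definition link1_val t P S y : R := S - t * hub1_val t S y - (P - 1) * y.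
Definition link2_val t P S y : R := S - t * link1_val t P S y - hub1_val t S y.
Definition hub2_val t P S y : R := S - t * link2_val t P S y - link1_val t P S y.

Lemma forced_vals_eqs t P S y :
  [/\ t * y = S - hub1_val t S y,
      t * hub1_val t S y = S - (link1_val t P S y + (P - 1) * y),
      t * link1_val t P S y = S - (hub1_val t S y + link2_val t P S y)
    & t * link2_val t P S y = S - (hub2_val t P S y + link1_val t P S y)].
Proof. by rewrite /hub2_val /link2_val /link1_val /hub1_val; split; ring. Qed.

(* The two remaining equations (at the centre of S^3_{q+1} and the definition
   of S), after eliminating d = (S - c)/(t + 1) and z = (S - c)/t and clearing
   the denominator t (t + 1), become linear forms in (S, y). *)
Definition tri_coef t Q : R := 2 * t + (t + 1) * (Q - 3).

Definition resid_hub2 t P Q S y : R :=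
  t * (t + 1) * (t * hub2_val t P S y + link2_val t P S y - S)
  + tri_coef t Q * (S - hub2_val t P S y).

Definition resid_sum t P Q S y : R :=
  t * (t + 1) * (hub1_val t S y + link1_val t P S y + (P - 1) * y
                 + hub2_val t P S y + link2_val t P S y - S)
  + tri_coef t Q * (S - hub2_val t P S y).

Lemma resid_hub2_lin t P Q S y :
  resid_hub2 t P Q S y = resid_hub2 t P Q 1 0 * S + resid_hub2 t P Q 0 1 * y.
Proof. by rewrite /resid_hub2 /tri_coef /hub2_val /link2_val /link1_val /hub1_val; ring. Qed.

Lemma resid_sum_lin t P Q S y :
  resid_sum t P Q S y = resid_sum t P Q 1 0 * S + resid_sum t P Q 0 1 * y.
Proof. by rewrite /resid_sum /tri_coef /hub2_val /link2_val /link1_val /hub1_val; ring. Qed.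

Lemma resid_det t P Q :
  resid_hub2 t P Q 1 0 * resid_sum t P Q 0 1 - resid_hub2 t P Q 0 1 * resid_sum t P Q 1 0
  = - (t * (t + 1)) * charU P Q t.
Proof.
by rewrite /resid_hub2 /resid_sum /tri_coef /hub2_val /link2_val /link1_val /hub1_val /charU; ring.
Qed.

(* The contribution of the triangle vertices and extra leaves of S^3_{q+1},
   once d and z are eliminated. *)
Lemma tri_leaf_identity Q {t S c d z : R} : (t + 1) * d = S - c -> t * z = S - c ->
  t * (t + 1) * (2 * d + (Q - 3) * z) = tri_coef t Q * (S - c).
Proof.
move=> hd hz.
have -> : t * (t + 1) * (2 * d + (Q - 3) * z) = 2 * t * ((t + 1) * d) + (t + 1) * (Q - 3) * (t * z).
  by ring.
by rewrite hd hz /tri_coef; ring.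
Qed.

Lemma quotient_eqs_trivial {t P Q S a b y c d z f : R} : t < -3 -> charU P Q t != 0 ->
  quotient_eqs t P Q S a b y c d z f ->
  [/\ a = 0, b = 0, y = 0, c = 0 & [/\ d = 0, z = 0 & f = 0]].
Proof.
move=> ht hg [hS ea eb ey [ec ed ez ef]].
have t0 : t != 0 by apply/eqP => h; lra.
have t1 : t + 1 != 0 by apply/eqP => h; lra.
have ha : hub1_val t S y = a by rewrite /hub1_val; lra.
have hb : link1_val t P S y = b by rewrite /link1_val ha; lra.
have hf : link2_val t P S y = f by rewrite /link2_val ha hb; lra.
have hc : hub2_val t P S y = c by rewrite /hub2_val hb hf; lra.
have hd : (t + 1) * d = S - c by lra.
have hdz := tri_leaf_identity Q hd ez.
have r1 : resid_hub2 t P Q S y = 0.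
  rewrite /resid_hub2 hc hf (_ : t * c + f - S = - (2 * d + (Q - 3) * z)); last by lra.
  by rewrite mulrN hdz addNr.
have r2 : resid_sum t P Q S y = 0.
  rewrite /resid_sum ha hb hc hf.
  rewrite (_ : a + b + (P - 1) * y + c + f - S = - (2 * d + (Q - 3) * z)); last by lra.
  by rewrite mulrN hdz addNr.
rewrite resid_hub2_lin in r1; rewrite resid_sum_lin in r2.
have [S0 y0] : S = 0 /\ y = 0.
  apply: det2_trivial r1 r2.
  by rewrite resid_det mulf_neq0 // oppr_eq0 mulf_neq0.
have a0 : a = 0 by rewrite -ha /hub1_val S0 y0; ring.
have b0 : b = 0 by rewrite -hb /link1_val ha a0 S0 y0; ring.
have f0 : f = 0 by rewrite -hf /link2_val ha hb a0 b0 S0; ring.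
have c0 : c = 0 by rewrite -hc /hub2_val hb hf b0 f0 S0; ring.
have z0 : z = 0.
  by move: ez; rewrite S0 c0 subrr => /eqP; rewrite mulf_eq0 (negbTE t0) => /eqP.
have d0 : d = 0.
  have : (t + 1) * d = 0 by rewrite S0 c0 in ed; lra.
  by move/eqP; rewrite mulf_eq0 (negbTE t1) => /eqP.
by [].
Qed.

Lemma quotient_eqs_nontrivial {t P Q : R} : t < -3 -> 1 <= P -> charU P Q t = 0 ->
  exists S a b y c d z f, quotient_eqs t P Q S a b y c d z f /\ (a != 0 \/ b != 0).
Proof.
move=> ht hP hg.
have t0 : t != 0 by apply/eqP => h; lra.
have t1 : t + 1 != 0 by apply/eqP => h; lra.
have cancel_tt1 X : t * (t + 1) * X = 0 -> X = 0.
  by move/eqP; rewrite !mulf_eq0 (negbTE t0) (negbTE t1) => /eqP.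
have := resid_det t P Q; rewrite hg mulr0 => hdet.
have [S [y [nz [r1 r2]]]] := det2_kernel hdet.
rewrite -resid_hub2_lin in r1; rewrite -resid_sum_lin in r2.
have [ey ea eb ef] := forced_vals_eqs t P S y.
rewrite /resid_hub2 /resid_sum in r1 r2.
set a := hub1_val t S y in r1 r2 ey ea eb ef.
set b := link1_val t P S y in r1 r2 ea eb ef.
set f := link2_val t P S y in r1 r2 eb ef.
set c := hub2_val t P S y in r1 r2 ef.
pose d := (S - c) / (t + 1); pose z := (S - c) / t.
have hd : (t + 1) * d = S - c by rewrite /d mulrC divfK.
have hz : t * z = S - c by rewrite /z mulrC divfK.
have hdz := tri_leaf_identity Q hd hz.
exists S, a, b, y, c, d, z, f; split; first split => //.
- apply/esym/eqP; rewrite -subr_eq0; apply/eqP/cancel_tt1; rewrite -r2 -hdz; ring.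
- split => //; last by lra.
  by apply/eqP; rewrite -subr_eq0; apply/eqP/cancel_tt1; rewrite -r1 -hdz; ring.
have [a0 | a_nz] := eqVneq a 0; last by left.
right; apply/eqP => b0.
rewrite a0 b0 mulr0 in ey ea.
have : (t - P + 1) * y = 0 by lra.
move/eqP; rewrite mulf_eq0 => /orP [/eqP h | /eqP y0]; first by lra.
have S0 : S = 0 by rewrite y0 mulr0 in ey; lra.
by move: nz; rewrite S0 y0 eqxx; case.
Qed.
End QuotientSystem.

Local Ltac nat_cases :=
  repeat (match goal with |- context [if ?b then _ else _] =>
            case: (boolP b) => ?; try (exfalso; lia) end; rewrite /=).

Lemma sum_nat_const (R : nmodType) (w : nat -> R) (lo hi : nat) (v : R) :
  (forall k, (lo <= k < hi)%N -> w k = v) -> \sum_(lo <= k < hi) w k = v *+ (hi - lo).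
Proof. by move=> hw; rewrite (eq_big_nat _ _ hw) sumr_const_nat. Qed.

Section ComplementEigenvalues.
Context {R : realFieldType} {p q : nat}.
Hypothesis p_ge1 : (1 <= p)%N.
Hypothesis q_ge3 : (3 <= q)%N.
Local Notation N := (p + q + 2)%N.

Definition adjU (i j : nat) : bool := U_edge p q i j || U_edge p q j i.

Definition nbsum (w : nat -> R) (j : nat) : R := \sum_(0 <= k < N) (adjU k j)%:R * w k.

Lemma Ucompl_entry (i j : 'I_N) :
  Ucompl_mx R p q i j = 1 - (i == j)%:R - (adjU i j)%:R.
Proof.
rewrite /Ucompl_mx /adjmx mxE /compl_rel (_ : U_rel i j = adjU i j) //.
have [<- | _] := eqVneq i j; last by case: (adjU i j); rewrite /= ?subr0 ?subrr.
by rewrite (_ : adjU i i = false) ?subrr ?subr0 //; rewrite /adjU /U_edge; lia.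
Qed.

Lemma Ucompl_row {v : 'rV[R]_N} {w : nat -> R} : (forall i : 'I_N, v 0 i = w i) ->
  forall j : 'I_N, (v *m Ucompl_mx R p q) 0 j = \sum_(0 <= k < N) w k - w j - nbsum w j.
Proof.
move=> hw j; rewrite mxE.
under eq_bigr => i _ do rewrite Ucompl_entry hw !mulrBr mulr1.
rewrite !sumrB big_mkord /nbsum big_mkord; congr (_ - _ - _).
  rewrite (bigD1 j) //= eqxx mulr1 big1 ?addr0 // => i /negbTE ->; exact: mulr0.
by apply: eq_bigr => i _; rewrite mulrC.
Qed.

Definition eigen_eqs (t : R) (w : nat -> R) : Prop :=
  forall j, (j < N)%N -> t * w j = \sum_(0 <= k < N) w k - nbsum w j.

Lemma Ucompl_eigenvalueP (t : R) : eigenvalue (Ucompl_mx R p q) (t - 1) <->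
  exists w : nat -> R, (exists2 j, (j < N)%N & w j != 0) /\ eigen_eqs t w.
Proof.
split.
- case/eigenvalueP => v hv /rV0Pn [i0 vi0].
  pose w k := v 0 (insubd i0 k).
  have hw (i : 'I_N) : v 0 i = w i by rewrite /w valKd.
  exists w; split; first by exists i0; rewrite // -hw.
  move=> j hj; have := Ucompl_row hw (Ordinal hj).
  by rewrite hv !mxE hw /=; lra.
- move=> [w [[j0 hj0 wj0] E]]; apply/eigenvalueP; exists (\row_j w j).
    apply/rowP => j; rewrite (Ucompl_row (w := w)) => [|i]; last by rewrite mxE.
    by have := E j (ltn_ord j); rewrite !mxE; lra.
  by apply/rV0Pn; exists (Ordinal hj0); rewrite mxE.
Qed.

Lemma eigen_eqs_ext {t : R} {w w' : nat -> R} :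
  (forall k, (k < N)%N -> w k = w' k) -> eigen_eqs t w -> eigen_eqs t w'.
Proof.
move=> ww' E j hj; rewrite -ww' // E //.
by congr (_ - _); apply: eq_big_nat => k /andP [_ hk]; rewrite ww'.
Qed.

Lemma sum_indicator_pt (w : nat -> R) {a : nat} : (a < N)%N ->
  \sum_(0 <= k < N) (k == a)%:R * w k = w a.
Proof.
move=> ha; rewrite (bigD1_seq a) ?mem_index_iota ?iota_uniq //= eqxx mul1r.
by rewrite big1 ?addr0 // => k /negbTE ->; rewrite mul0r.
Qed.

Lemma nbsum_pt (w : nat -> R) (j a : nat) : (a < N)%N ->
  (forall k, adjU k j = (k == a)) -> nbsum w j = w a.
Proof.
move=> ha hj; rewrite -(sum_indicator_pt w ha).
by apply: eq_bigr => k _; rewrite hj.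
Qed.

Lemma nbsum_pt2 (w : nat -> R) (j a b : nat) : (a < N)%N -> (b < N)%N -> a != b ->
  (forall k, adjU k j = (k == a) || (k == b)) -> nbsum w j = w a + w b.
Proof.
move=> ha hb hab hj.
rewrite -(sum_indicator_pt w ha) -(sum_indicator_pt w hb) -big_split /=.
apply: eq_bigr => k _; rewrite hj -mulrDl -natrD.
by case: (eqVneq k a) => [->|_]; rewrite ?(negbTE hab).
Qed.

Lemma nbsum_range (w : nat -> R) (j lo hi : nat) : (lo <= hi <= N)%N ->
  (forall k, adjU k j = (lo <= k < hi)%N) -> nbsum w j = \sum_(lo <= k < hi) w k.
Proof.
move=> /andP [lohi hiN] hj.
have vanish l h : (forall k, (l <= k < h)%N -> ~~ (lo <= k < hi)%N) ->
    \sum_(l <= k < h) (adjU k j)%:R * w k = 0.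
  move=> hout; rewrite big_nat big1 // => k hk.
  by rewrite hj (negbTE (hout k hk)) mul0r.
rewrite /nbsum (@big_cat_nat _ _ _ lo 0 N) //; last exact: leq_trans hiN.
rewrite (@big_cat_nat _ _ _ hi lo N) // (vanish 0%N lo); last by move=> k; lia.
rewrite (vanish hi N); last by move=> k; lia.
rewrite /= add0r addr0; apply: eq_big_nat => k hk.
by rewrite hj hk mul1r.
Qed.

Local Ltac nbhd := move=> k; rewrite /adjU /U_edge; apply/idP/idP; lia.

Lemma nbsum_hub1 (w : nat -> R) : nbsum w 0 = \sum_(1 <= k < p.+1) w k.
Proof. by apply: nbsum_range; [lia | nbhd]. Qed.

Lemma nbsum_link1 (w : nat -> R) : nbsum w 1 = w 0%N + w (p + q + 1)%N.
Proof. by apply: nbsum_pt2; [lia | lia | lia | nbhd]. Qed.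

Lemma nbsum_leaf1 (w : nat -> R) (j : nat) : (2 <= j <= p)%N -> nbsum w j = w 0%N.
Proof. by move=> hj; apply: nbsum_pt; [lia | nbhd]. Qed.

Lemma nbsum_hub2 (w : nat -> R) : nbsum w p.+1 = \sum_(p.+2 <= k < N) w k.
Proof. by apply: nbsum_range; [lia | nbhd]. Qed.

Lemma nbsum_tri1 (w : nat -> R) : nbsum w p.+2 = w p.+1 + w p.+3.
Proof. by apply: nbsum_pt2; [lia | lia | lia | nbhd]. Qed.

Lemma nbsum_tri2 (w : nat -> R) : nbsum w p.+3 = w p.+1 + w p.+2.
Proof. by apply: nbsum_pt2; [lia | lia | lia | nbhd]. Qed.

Lemma nbsum_leaf2 (w : nat -> R) (j : nat) : (p.+4 <= j <= p + q)%N -> nbsum w j = w p.+1.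
Proof. by move=> hj; apply: nbsum_pt; [lia | nbhd]. Qed.

Lemma nbsum_link2 (w : nat -> R) : nbsum w (p + q + 1) = w p.+1 + w 1%N.
Proof. by apply: nbsum_pt2; [lia | lia | lia | nbhd]. Qed.

Lemma vertex_classes {j : nat} : (j < N)%N ->
  j = 0%N \/ j = 1%N \/ (2 <= j <= p)%N \/ j = p.+1 \/
  j = p.+2 \/ j = p.+3 \/ (p.+4 <= j <= p + q)%N \/ j = (p + q + 1)%N.
Proof. by move=> hj; lia. Qed.

Definition classvec (a b y c d z f : R) (k : nat) : R :=
  if k == 0%N then a else if k == 1%N then b else if (k <= p)%N then y
  else if k == p.+1 then c else if (k <= p.+3)%N then d
  else if (k <= p + q)%N then z else f.

Section ClassVector.
Context {a b y c d z f : R}.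
Local Notation v := (classvec a b y c d z f).

Lemma classvec_values :
  [/\ v 0 = a, v 1 = b, v p.+1 = c, v p.+2 = d & [/\ v p.+3 = d, v (p + q + 1) = f,
      forall k, (2 <= k <= p)%N -> v k = y & forall k, (p.+4 <= k <= p + q)%N -> v k = z]].
Proof. by rewrite /classvec; split; [| | nat_cases.. | split => [| |k hk|k hk]; nat_cases]. Qed.

Lemma sum_classvec_star : \sum_(1 <= k < p.+1) v k = b + (p%:R - 1) * y.
Proof.
have [_ v1 _ _ [_ _ vy _]] := classvec_values.
rewrite big_ltn // (@sum_nat_const _ v 2 p.+1 y) => [|k hk]; last by apply: vy; lia.
by rewrite v1 subSS -[y *+ _]mulr_natr natrB // mulrC.
Qed.

Lemma sum_classvec_S : \sum_(p.+2 <= k < N) v k = 2 * d + (q%:R - 3) * z + f.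
Proof.
have [_ _ _ vd [ve vf _ vz]] := classvec_values.
rewrite (_ : N = (p + q + 1).+1) ?big_nat_recr /=; [|lia|lia].
rewrite big_ltn; last lia.
rewrite big_ltn; last lia.
rewrite (@sum_nat_const _ v p.+4 (p + q + 1) z) => [|k hk]; last by apply: vz; lia.
rewrite (_ : (p + q + 1 - p.+4)%N = (q - 3)%N); last lia.
by rewrite -[z *+ _]mulr_natr natrB // vd ve vf; ring.
Qed.

Lemma sum_classvec :
  \sum_(0 <= k < N) v k = a + b + (p%:R - 1) * y + c + 2 * d + (q%:R - 3) * z + f.
Proof.
have [v0 _ vc _ _] := classvec_values.
rewrite big_ltn; last lia.
rewrite (@big_cat_nat _ _ _ p.+1 1 N) //; last lia.
rewrite sum_classvec_star big_ltn; last lia.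
by rewrite /= sum_classvec_S v0 vc; ring.
Qed.

(* Given the equations at the extra leaves (which hold vacuously in the graph
   when p = 1 or q = 3), a class-constant vector solves the eigen-equations iff
   its values solve the quotient system. *)
Lemma classvec_eigen_eqsP {t S : R} : S = \sum_(0 <= k < N) v k ->
  t * y = S - a -> t * z = S - c ->
  eigen_eqs t v <-> quotient_eqs t p%:R q%:R S a b y c d z f.
Proof.
move=> hS ey ez; have [v0 v1 vc vd [ve vf vy vz]] := classvec_values.
split=> [E | [_ ea eb _ [ec ed _ ef]] j hj].
  have eq_at j : (j < N)%N -> t * v j = S - nbsum v j by move=> hj; rewrite hS E.
  split; [by rewrite hS sum_classvec | | | done | split => //].
  - by rewrite -v0 eq_at ?nbsum_hub1 ?sum_classvec_star //; lia.
  - by rewrite -v1 eq_at ?nbsum_link1 ?v0 ?vf //; lia.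
  - by rewrite -vc eq_at ?nbsum_hub2 ?sum_classvec_S //; lia.
  - by rewrite -{1}vd eq_at ?nbsum_tri1 ?vc ?ve //; lia.
  - by rewrite -vf eq_at ?nbsum_link2 ?vc ?v1 //; lia.
rewrite -hS.
case: (vertex_classes hj) => [-> | [-> | [hj' | [-> | [-> | [-> | [hj' | ->]]]]]]].
- by rewrite nbsum_hub1 sum_classvec_star v0.
- by rewrite nbsum_link1 v0 v1 vf.
- by rewrite nbsum_leaf1 // v0 vy.
- by rewrite nbsum_hub2 sum_classvec_S vc.
- by rewrite nbsum_tri1 vc vd ve.
- by rewrite nbsum_tri2 vc vd ve.
- by rewrite nbsum_leaf2 // vc vz.
- by rewrite nbsum_link2 vc v1 vf.
Qed.

End ClassVector.

Lemma classvec0 (k : nat) : classvec 0 0 0 0 0 0 0 k = 0.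
Proof. by rewrite /classvec; repeat case: ifP. Qed.

(* For t not in {0, 1} every solution of the eigen-equations is class-constant:
   all extra leaves of a star carry the same value, and so do the two triangle
   vertices since (t - 1)(w_{p+2} - w_{p+3}) = 0. *)
Lemma eigen_eqs_classvec {t : R} {w : nat -> R} : t != 0 -> t != 1 -> eigen_eqs t w ->
  exists a b y c d z f, [/\ forall k, (k < N)%N -> w k = classvec a b y c d z f k,
    t * y = \sum_(0 <= k < N) w k - a & t * z = \sum_(0 <= k < N) w k - c].
Proof.
move=> t0 t1 E; set S := \sum_(0 <= k < N) w k.
exists (w 0%N), (w 1%N), ((S - w 0%N) / t), (w p.+1), (w p.+2), ((S - w p.+1) / t),
  (w (p + q + 1)%N).
split; [| by rewrite mulrC divfK | by rewrite mulrC divfK].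
move=> k hk; case: (vertex_classes hk) => [-> | [-> | [hk' | [-> | [-> | [-> | [hk' | ->]]]]]]];
  rewrite /classvec; nat_cases; try done.
- by rewrite -(mulKf t0 (w k)) E // nbsum_leaf1 // mulrC.
- have [lt2 lt3] : (p.+2 < N)%N /\ (p.+3 < N)%N by lia.
  have := E _ lt2; have := E _ lt3; rewrite nbsum_tri2 nbsum_tri1 => h3 h2.
  have : (t - 1) * (w p.+3 - w p.+2) = 0 by lra.
  by move/eqP; rewrite mulf_eq0 subr_eq0 (negbTE t1) subr_eq0 => /eqP.
- by rewrite -(mulKf t0 (w k)) E // nbsum_leaf2 // mulrC.
Qed.

Lemma eigenvalue_root {e : R} : eigenvalue (Ucompl_mx R p q) e -> e < -4 ->
  charU p%:R q%:R (e + 1) = 0.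
Proof.
move=> ev he; set t := e + 1.
have t0 : t != 0 by apply/eqP; rewrite /t => h; lra.
have t1 : t != 1 by apply/eqP; rewrite /t => h; lra.
have /Ucompl_eigenvalueP [w [[j hj wj] E]] : eigenvalue (Ucompl_mx R p q) (t - 1).
  by rewrite /t addrK.
have [a [b [y [c [d [z [f [hw ey ez]]]]]]]] := eigen_eqs_classvec t0 t1 E.
have hS : \sum_(0 <= k < N) w k = \sum_(0 <= k < N) classvec a b y c d z f k.
  by apply: eq_big_nat => k /andP [_ hk]; rewrite hw.
have Ev : eigen_eqs t (classvec a b y c d z f) := eigen_eqs_ext hw E.
have Qe := (classvec_eigen_eqsP hS ey ez).1 Ev.
have [//|hg] := eqVneq (charU p%:R q%:R t) 0.
have ht : t < -3 by rewrite /t; lra.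
have [a0 b0 y0 c0 [d0 z0 f0]] := quotient_eqs_trivial ht hg Qe.
by move: wj; rewrite hw // a0 b0 y0 c0 d0 z0 f0 classvec0 eqxx.
Qed.

Lemma root_eigenvalue (t : R) : t < -3 -> charU p%:R q%:R t = 0 ->
  eigenvalue (Ucompl_mx R p q) (t - 1).
Proof.
move=> ht hg.
have hp : (1 : R) <= p%:R by rewrite ler1n.
have [S [a [b [y [c [d [z [f [Qe hab]]]]]]]]] := quotient_eqs_nontrivial ht hp hg.
apply/Ucompl_eigenvalueP; exists (classvec a b y c d z f); split.
  by case: hab => h; [exists 0%N | exists 1%N]; rewrite //; lia.
case: (Qe) => hS _ _ ey [_ _ ez _].
have hS' : S = \sum_(0 <= k < N) classvec a b y c d z f k by rewrite sum_classvec.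
exact: (classvec_eigen_eqsP hS' ey ez).2 Qe.
Qed.

End ComplementEigenvalues.

(* An eigenvalue of an n x n matrix with entries of norm at most 1 has norm at
   most n (look at a coordinate of maximal norm of an eigenvector). *)
Lemma eigenvalue_norm_le (F : realFieldType) (n : nat) (A : 'M[F]_n) (e : F) :
  (forall i j, `|A i j| <= 1) -> eigenvalue A e -> `|e| <= n%:R.
Proof.
move=> hA /eigenvalueP [v hv /rV0Pn [i0 vi0]].
have [j _ hj] := @arg_maxP _ _ _ i0 predT (fun i => `|v 0 i|) isT.
have vj_gt0 : 0 < `|v 0 j| by apply: lt_le_trans (hj i0 isT); rewrite normr_gt0.
have ej : e * v 0 j = \sum_i v 0 i * A i j.
  by have := congr1 (fun M : 'rV_n => M 0 j) hv; rewrite /= !mxE => <-.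
rewrite -(ler_pM2r vj_gt0) -normrM ej.
apply: le_trans (ler_norm_sum _ _ _) _.
have -> : n%:R * `|v 0 j| = \sum_(i < n) `|v 0 j| by rewrite sumr_const card_ord mulr_natl.
apply: ler_sum => i _; rewrite normrM.
by apply: le_trans (ler_wpM2l (normr_ge0 _) (hA i j)) _; rewrite mulr1; apply: hj.
Qed.

Lemma Ucompl_eigenvalue_ge {R : realFieldType} {p q : nat} {e : R} :
  eigenvalue (Ucompl_mx R p q) e -> - (p + q + 2)%N%:R <= e.
Proof.
move=> ev; suff : `|e| <= (p + q + 2)%N%:R by rewrite ler_norml => /andP [].
apply: eigenvalue_norm_le ev => i j.
by rewrite /Ucompl_mx /adjmx mxE; case: (compl_rel _ i j); rewrite ?normr0 ?normr1.
Qed.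

Section BalancedSplit.
Context {R : rcfType} {p q p0 q0 : nat}.
Hypothesis p_ge1 : (1 <= p)%N.
Hypothesis q_ge3 : (3 <= q)%N.
Hypothesis q0_ge9 : (9 <= q0)%N.
Hypothesis balanced : p0 = q0 \/ p0 = q0.+1.
Hypothesis same_order : (p + q = p0 + q0)%N.
Hypothesis unbalanced : p != p0.

Let order_R : ((p0 + q0 + 2)%N%:R : R) = p0%:R + q0%:R + 2.
Proof. by rewrite !natrD. Qed.

(* For each eigenvalue e of U(p,q)^c there is a point ts in [-n, -3], with
   ts - 1 <= e, where charU p0 q0 is negative: ts = e + 1 if e < -4 (by
   charU_balanced_lt, since e + 1 is a root of charU p q), and ts = -3 otherwise. *)
Lemma charU_neg_point {e : R} : eigenvalue (Ucompl_mx R p q) e ->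
  exists ts : R,
    [/\ charU p0%:R q0%:R ts < 0, ts <= -3, ts - 1 <= e & - (p0 + q0 + 2)%N%:R <= ts].
Proof.
move=> ev; have e_ge := Ucompl_eigenvalue_ge ev; rewrite same_order order_R in e_ge.
rewrite order_R; case: (ltP e (-4)) => he; last first.
  have [P0_ge9 Q0_ge9] : (9 : R) <= p0%:R /\ (9 : R) <= q0%:R.
    by rewrite !(ler_nat R 9); lia.
  by exists (-3); split; [exact: charU_at_m3_lt0 | lra | lra | lra].
exists (e + 1); split; [| lra | lra | lra].
rewrite -(eigenvalue_root p_ge1 q_ge3 ev he); apply: charU_balanced_lt; first lra.
- by rewrite -!natrD same_order.
- by case: balanced => ->; [left | right; rewrite -natr1 addrK].
- case: (ltngtP p p0) => h; last by move: unbalanced; rewrite h eqxx.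
    by right; rewrite lerBrDr natr1 ler_nat.
  by left; rewrite natr1 ler_nat.
Qed.

(* The balanced split has an eigenvalue strictly below every eigenvalue of the
   unbalanced one: charU p0 q0 changes sign on [-n, ts], and its root x < ts
   gives the eigenvalue x - 1 < e. *)
Lemma balanced_smaller_eigenvalue {e : R} : eigenvalue (Ucompl_mx R p q) e ->
  exists2 e0, eigenvalue (Ucompl_mx R p0 q0) e0 & e0 < e.
Proof.
move=> ev; have [ts [neg_ts ts_le3 ts_le_e s_le_ts]] := charU_neg_point ev.
set s : R := (p0 + q0 + 2)%N%:R in s_le_ts.
have s_ge20 : 20 <= s by rewrite /s (ler_nat R 20); lia.
have pos_s : 0 < charU p0%:R q0%:R (- s).
  by apply: charU_far_left_gt0 => //; rewrite /s order_R; lra.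
pose g : {poly R} := - charU (p0%:R)%:P (q0%:R)%:P 'X.
have sign_change : g.[- s] <= 0 <= g.[ts].
  by rewrite !hornerN !horner_charU; apply/andP; split; lra.
have [x /andP [_ x_le_ts] /rootP] := @poly_ivt R g (- s) ts s_le_ts sign_change.
rewrite hornerN horner_charU => /eqP; rewrite oppr_eq0 => /eqP root_x.
have x_lt_ts : x < ts.
  rewrite lt_neqAle x_le_ts andbT.
  by apply: contraTneq neg_ts => <-; rewrite root_x ltxx.
have p0_ge1 : (1 <= p0)%N by lia.
have q0_ge3 : (3 <= q0)%N by lia.
by exists (x - 1); [apply: root_eigenvalue => //; lra | lra].
Qed.
End BalancedSplit.

Theorem lemma2p2 (R : rcfType) (n p q : nat) (l1 l2 : R) :
  (20 <= n)%N -> (1 <= p)%N -> (3 <= q)%N -> (p + q = n - 2)%N ->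
  is_lambda_min (Ucompl_mx R p q) l1 ->
  is_lambda_min (Ucompl_mx R (uphalf (n - 2)) (n - 2)./2) l2 ->
  l2 <= l1 /\ (l1 = l2 <-> (p = uphalf (n - 2) /\ q = (n - 2)./2)).
Proof.
move=> hn hp hq hpq [ev1 min1] [ev2 min2].
have e1 := odd_double_half (n - 2); have e2 := uphalf_half (n - 2).
rewrite -muln2 in e1.
have balanced : uphalf (n - 2) = (n - 2)./2 \/ uphalf (n - 2) = ((n - 2)./2).+1 by lia.
have [Ep | unbal] := eqVneq p (uphalf (n - 2)).
  have Eq : q = (n - 2)./2 by lia.
  rewrite Ep Eq in ev1 min1 *.
  have le21 := min2 l1 ev1; have le12 := min1 l2 ev2.
  by split=> //; split=> // _; apply/eqP; rewrite eq_le le12 le21.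
have q0_ge9 : (9 <= (n - 2)./2)%N by lia.
have same_order : (p + q = uphalf (n - 2) + (n - 2)./2)%N by lia.
have [e0 ev0 lt0] := balanced_smaller_eigenvalue hp hq q0_ge9 balanced same_order unbal ev1.
have lt21 : l2 < l1 := le_lt_trans (min2 e0 ev0) lt0.
split; first exact: ltW.
by split=> [eq12 | [eqp _]]; [move: lt21; rewrite eq12 ltxx | rewrite eqp eqxx in unbal].
Qed.
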